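(* Let $c$ be an even integer greater than one and $\Gamma=\langle 2,c+1\rangle$ (the numerical semigroup generated by $2$ and $c+1$). For $m\in\Gamma$, \[ \delta^2_\Gamma(m)=\begin{cases}3 & \text{if } m=2,\\ 4 & \text{if } 2<m\le c+1.\end{cases} \]
   Context: For a numerical semigroup $\Gamma$: $D_\Gamma(x)=\{s\in\Gamma:x-s\in\Gamma\}$ and $\delta^2_\Gamma(m)=\min\{|D_\Gamma(m_1)\cup D_\Gamma(m_2)|: m\le m_1<m_2,\ m_1,m_2\in\Gamma\}$. *)

From mathcomp Require Import all_boot.
Set Implicit Arguments. Unset Strict Implicit. Unset Printing Implicit Defensive.

(* The coefficients are necessarily <= s when generators are positive; we bound
   them by s (this is exact for g1, g2 >= 1). *)
Definition in_sg2 (g1 g2 s : nat) : bool :=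
  [exists a : 'I_s.+1, exists b : 'I_s.+1, s == a * g1 + b * g2].

(* D_Gamma(x) = { s in Gamma : x - s in Gamma }, as a list (s ranges over 0..x,
   since x - s in Gamma forces s <= x in the integers). *)
Definition Dset (g1 g2 x : nat) : seq nat :=
  [seq s <- iota 0 x.+1 | in_sg2 g1 g2 s && in_sg2 g1 g2 (x - s)].

Definition card_union (g1 g2 m1 m2 : nat) : nat :=
  size (undup (Dset g1 g2 m1 ++ Dset g1 g2 m2)).

Definition delta2_is (g1 g2 m k : nat) : Prop :=
  (exists m1 m2, [/\ m <= m1, m1 < m2, in_sg2 g1 g2 m1, in_sg2 g1 g2 m2
                    & card_union g1 g2 m1 m2 = k]) /\
  (forall m1 m2, m <= m1 -> m1 < m2 -> in_sg2 g1 g2 m1 -> in_sg2 g1 g2 m2 ->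
                 k <= card_union g1 g2 m1 m2).

(* In Γ = <2, c+1> with c even, s - 2 lies in Γ for every s ∈ Γ with
   s >= 2 except s = c + 1.  Hence for 3 <= m1 < m2 in Γ the element 2 lies
   in D(m1) ∪ D(m2) besides 0, m1 and m2, giving the lower bound 4; for
   m1 >= 2 the trivial elements 0, m1, m2 give 3.  The pairs (2, 4) and
   (c + 1, c + 3) attain these bounds: D(2) ∪ D(4) = {0, 2, 4} and
   D(c + 1) ∪ D(c + 3) = {0, 2, c + 1, c + 3}. *)
From mathcomp Require Import all_boot zify.

Set Implicit Arguments.
Unset Strict Implicit.
Unset Printing Implicit Defensive.

Section NumericalSemigroup2.
Variables g1 g2 : nat.

Lemma in_sg2_0 : in_sg2 g1 g2 0.
Proof. by apply/existsP; exists ord0; apply/existsP; exists ord0. Qed.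

Lemma in_sg2P s : 0 < g1 -> 0 < g2 ->
  reflect (exists a b, s = a * g1 + b * g2) (in_sg2 g1 g2 s).
Proof.
move=> g1_gt0 g2_gt0.
apply: (iffP existsP) => [[a /existsP[b /eqP ->]] | [a [b ->]]].
  by exists a, b.
have lt_a : a < (a * g1 + b * g2).+1 by nia.
have lt_b : b < (a * g1 + b * g2).+1 by nia.
by exists (Ordinal lt_a); apply/existsP; exists (Ordinal lt_b).
Qed.

Lemma mem_Dset x y :
  (x \in Dset g1 g2 y) = [&& x <= y, in_sg2 g1 g2 x & in_sg2 g1 g2 (y - x)].
Proof. by rewrite mem_filter mem_iota add0n ltnS andbC. Qed.

Lemma Dset0 y : in_sg2 g1 g2 y -> 0 \in Dset g1 g2 y.
Proof. by move=> hy; rewrite mem_Dset in_sg2_0 subn0. Qed.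

Lemma Dset_self y : in_sg2 g1 g2 y -> y \in Dset g1 g2 y.
Proof. by move=> hy; rewrite mem_Dset leqnn hy subnn in_sg2_0. Qed.

Lemma card_union_ge s m1 m2 :
  uniq s -> {subset s <= Dset g1 g2 m1 ++ Dset g1 g2 m2} ->
  size s <= card_union g1 g2 m1 m2.
Proof.
move=> s_uniq s_sub; apply: uniq_leq_size => // x /s_sub.
by rewrite mem_undup.
Qed.

Lemma card_union_le s m1 m2 :
  {subset Dset g1 g2 m1 ++ Dset g1 g2 m2 <= s} ->
  card_union g1 g2 m1 m2 <= size s.
Proof.
move=> D_sub; apply: uniq_leq_size; first exact: undup_uniq.
by move=> x; rewrite mem_undup => /D_sub.
Qed.

Lemma card_union_ge3 m1 m2 :
  0 < m1 < m2 -> in_sg2 g1 g2 m1 -> in_sg2 g1 g2 m2 ->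
  3 <= card_union g1 g2 m1 m2.
Proof.
move=> /andP[m1_gt0 lt_m12] h1 h2.
apply: (card_union_ge (s := [:: 0; m1; m2])).
  by rewrite /= !inE; lia.
by move=> x; rewrite !inE mem_cat => /or3P[] /eqP->;
  rewrite ?Dset0 ?Dset_self ?orbT.
Qed.

Lemma delta2_isP m k m1 m2 :
  m <= m1 < m2 -> in_sg2 g1 g2 m1 -> in_sg2 g1 g2 m2 ->
  card_union g1 g2 m1 m2 <= k ->
  (forall n1 n2, m <= n1 -> n1 < n2 -> in_sg2 g1 g2 n1 -> in_sg2 g1 g2 n2 ->
     k <= card_union g1 g2 n1 n2) ->
  delta2_is g1 g2 m k.
Proof.
move=> /andP[le_m1 lt_m12] h1 h2 ub lb; split=> //.
exists m1, m2; split=> //; apply/eqP; rewrite eqn_leq ub.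
exact: lb.
Qed.

End NumericalSemigroup2.

Section SemigroupTwoOdd.
Variable c : nat.
Hypothesis c_even : ~~ odd c.
Hypothesis c_gt1 : 1 < c.

Lemma in_sg2_2E s : in_sg2 2 c.+1 s = ~~ odd s || (c < s).
Proof.
apply/in_sg2P/idP => //.
  case=> a [[|b] ->].
    by rewrite mul0n addn0 oddM andbF.
  by apply/orP; right; nia.
case: (boolP (odd s)) => /= [s_odd s_big | s_even _].
  by exists (s - c.+1)./2, 1; lia.
by exists s./2, 0; lia.
Qed.

Lemma mem_Dset_2E x y : (x \in Dset 2 c.+1 y) =
  [&& x <= y, ~~ odd x || (c < x) & ~~ odd (y - x) || (c < y - x)].
Proof. by rewrite mem_Dset !in_sg2_2E. Qed.

Lemma in_sg2_subn2 s :
  in_sg2 2 c.+1 s -> 2 <= s -> s != c.+1 -> in_sg2 2 c.+1 (s - 2).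
Proof. by rewrite !in_sg2_2E; lia. Qed.

Lemma card_union_ge4 m1 m2 :
  3 <= m1 < m2 -> in_sg2 2 c.+1 m1 -> in_sg2 2 c.+1 m2 ->
  4 <= card_union 2 c.+1 m1 m2.
Proof.
move=> /andP[m1_ge3 lt_m12] h1 h2.
have two_in : 2 \in Dset 2 c.+1 m1 ++ Dset 2 c.+1 m2.
  have sg2_2 : in_sg2 2 c.+1 2 by rewrite in_sg2_2E.
  rewrite mem_cat !mem_Dset sg2_2.
  have [m1_eq|m1_neq] := eqVneq m1 c.+1.
    have m2_neq : m2 != c.+1 by rewrite -m1_eq gtn_eqF.
    by rewrite (in_sg2_subn2 h2) ?orbT ?andbT //; lia.
  by rewrite (in_sg2_subn2 h1) ?andbT //; lia.
apply: (card_union_ge (s := [:: 0; 2; m1; m2])).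
  by rewrite /= !inE; lia.
by move=> x; rewrite !inE mem_cat => /or4P[] /eqP->;
  rewrite ?Dset0 ?Dset_self ?orbT -?mem_cat.
Qed.

Lemma card_union_2_4 : card_union 2 c.+1 2 4 <= 3.
Proof.
apply: (card_union_le (s := [:: 0; 2; 4])) => x.
by rewrite mem_cat !mem_Dset_2E !inE; lia.
Qed.

Lemma card_union_c1_c3 : card_union 2 c.+1 c.+1 c.+3 <= 4.
Proof.
apply: (card_union_le (s := [:: 0; 2; c.+1; c.+3])) => x.
by rewrite mem_cat !mem_Dset_2E !inE; lia.
Qed.

End SemigroupTwoOdd.

Theorem lemma4p6 (c : nat) (hc_even : ~~ odd c) (hc : 1 < c) (m : nat)
  (hm : in_sg2 2 c.+1 m) :
  (m = 2 -> delta2_is 2 c.+1 m 3) /\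
  (2 < m <= c.+1 -> delta2_is 2 c.+1 m 4).
Proof.
have in_sg2_even n : ~~ odd n -> in_sg2 2 c.+1 n by rewrite in_sg2_2E // => ->.
have in_sg2_big n : c < n -> in_sg2 2 c.+1 n by rewrite in_sg2_2E // orbC => ->.
split=> [-> | /andP[m_gt2 m_le]].
- apply: (delta2_isP (m1 := 2) (m2 := 4)) => //.
  + exact: in_sg2_even.
  + exact: in_sg2_even.
  + exact: card_union_2_4.
  + by move=> n1 n2 *; apply: card_union_ge3 => //; lia.
- apply: (delta2_isP (m1 := c.+1) (m2 := c.+3)).
  + lia.
  + by apply: in_sg2_big; lia.
  + by apply: in_sg2_big; lia.
  + exact: card_union_c1_c3.
  + by move=> n1 n2 *; apply: card_union_ge4 => //; lia.
Qed.
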